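(* In the setting described in the context, fix $\vartheta\in(0,\infty)$, write $\mathrm{range}(f')=(a,b)$ and let $g:(a,b)\to(0,\infty)$ be the inverse of $f'$; for $c\in\mathbb{R}$ put $I_c=\{\vartheta^{-1}y+c: y\in(a,b)\}$. If $f'(x)\to\infty$ as $x\to\infty$ and, for every $c\in\mathbb{R}$, the random variable $g\bigl(\vartheta(\ell(T,\cdot)-c)\bigr)\mathbf{1}_{\{\ell(T,\cdot)\in I_c\}}$ is $\mathsf{P}$-integrable, then there exist a constant $c\in\mathbb{R}$ and a function $z:\mathbb{R}\to\mathbb{R}_+$ such that $x-f'(z(x))/\vartheta=c$ for $x\in I_c$, $z(x)=0$ for $x\notin I_c$, $\mathsf{E}\bigl(z(\ell(T,\cdot))\bigr)=1$ and $\mathsf{P}\bigl(\ell(T,\cdot)<\sup I_c\bigr)=1$.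
   Context: Fix $T\in(0,\infty)$, $d\in\mathbb{N}$, let $\Omega=D([0,T],\mathbb{R}^d)$ be the set of càdlàg paths with canonical process $X(t)(\omega)=\omega(t)$ and natural filtration $(\mathcal{F}^0_t)$. $\mathsf{P}$ is a probability measure on $(\Omega,\mathcal{F}^0_T)$ with $\mathsf{P}(X(0)=0)=1$; $\mathsf{E}$ denotes $\mathsf{P}$-expectation. $f:\mathbb{R}_+\to\mathbb{R}$ is twice differentiable and strictly convex with $f(1)=0$, so $f'$ is continuous strictly increasing on $(0,\infty)$ and its range is an open interval $(a,b)$ ($a,b$ possibly infinite). $\ell:[0,T]\times\Omega\to\mathbb{R}$ is a non-anticipative functional (measurable with $\ell(t,\omega)=\ell(t,\omega(t\wedge\cdot))$) with $\ell(0,0)=0$; $\ell(T,\cdot)$ is the terminal loss. *)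

From HB Require Import structures.
From mathcomp Require Import all_boot all_order all_algebra.
From mathcomp Require Import all_classical all_reals all_analysis.
Set Implicit Arguments. Unset Strict Implicit. Unset Printing Implicit Defensive.
Import Order.TTheory GRing.Theory Num.Theory.
Import numFieldNormedType.Exports.
Local Open Scope classical_set_scope.
Local Open Scope ring_scope.

(* Càdlàg paths w : [0,T] -> R^d, represented as functions R -> 'rV[R]_d
   that are extended constantly outside [0,T] (w t = w (clamp t)), so that
   each element of D([0,T],R^d) has exactly one representative. *)
Definition cadlag (R : realType) (T : R) (d : nat) (w : R -> 'rV[R]_d) : Prop :=
  [/\ (forall t, w t = w (Num.min (Num.max t 0) T)),
      (forall t, 0 <= t < T -> w x @[x --> t^'+] --> w t) &
      (forall t, 0 < t <= T -> exists l : 'rV[R]_d, w x @[x --> t^'-] --> l)].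

Record cadlag_path (R : realType) (T : R) (d : nat) := CadlagPath {
  path_val :> R -> 'rV[R]_d;
  path_cadlag : cadlag T path_val }.

HB.instance Definition _ (R : realType) (T : R) (d : nat) :=
  gen_eqMixin (cadlag_path T d).
HB.instance Definition _ (R : realType) (T : R) (d : nat) :=
  gen_choiceMixin (cadlag_path T d).

Lemma cadlag0 (R : realType) (T : R) (d : nat) : cadlag T (fun _ => (0 : 'rV[R]_d)).
Proof.
split => //; first by move=> t _; exact: cvg_cst.
by move=> t _; exists 0; exact: cvg_cst.
Qed.

Definition zero_path (R : realType) (T : R) (d : nat) : cadlag_path T d :=
  CadlagPath (cadlag0 T d).

HB.instance Definition _ (R : realType) (T : R) (d : nat) :=
  isPointed.Build (cadlag_path T d) (zero_path T d).

(* Generators of F^0_T: preimages of Borel sets under the coordinates of the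
   canonical process X(t), 0 <= t <= T. *)
Definition coord_sets (R : realType) (T : R) (d : nat) : set (set (cadlag_path T d)) :=
  [set A | exists t : R, 0 <= t <= T /\ exists i : 'I_d, exists B : set R,
     measurable B /\ A = [set w : cadlag_path T d | B (path_val w t ord0 i)]].

Definition Omega (R : realType) (T : R) (d : nat) := g_sigma_algebraType (@coord_sets R T d).

Definition non_anticipative (R : realType) (T : R) (d : nat)
  (ell : R -> Omega T d -> R) : Prop :=
  measurable_fun (`[0, T] `*` setT) (fun p : R * Omega T d => ell p.1 p.2) /\
  forall t, 0 <= t <= T -> forall w w' : Omega T d,
    (forall s, 0 <= s <= t -> path_val w s = path_val w' s) -> ell t w = ell t w'.

Definition Ic (R : realType) (a b : \bar R) (theta c : R) : set R :=
  [set x | exists y : R, (a < y%:E < b)%E /\ x = y / theta + c].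

From HB Require Import structures.
From mathcomp Require Import all_boot all_order all_algebra.
From mathcomp Require Import all_classical all_reals all_analysis.
From mathcomp Require Import measurable_realfun.
From mathcomp Require Import ring lra.
Import Order.TTheory GRing.Theory Num.Theory.
Import numFieldNormedType.Exports.
Local Open Scope classical_set_scope.
Local Open Scope ring_scope.

(* Strict convexity makes chord slopes strictly increasing, hence f' is
   strictly increasing on (0,oo); as f' -> oo, b = +oo and the inverse g of f',
   extended by 0 below a, is a continuous nondecreasing map from R onto [0,oo).
   Then z_c(x) = g(theta (x - c)) 1_{I_c}(x) = gext(theta (x - c)), and
   H(c) = E z_c(ell T) is nonincreasing in c, continuous by dominated
   convergence, tends to +oo as c -> -oo by monotone convergence and to 0 as
   c -> +oo.  At c = sup {H >= 1}, approaching c from both sides gives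
   H(c) = 1.  Finally I_c is unbounded above, so P(ell T < sup I_c) = 1. *)

Definition slope {R : realFieldType} (f : R -> R) (x y : R) := (f y - f x) / (y - x).

Lemma slopeC {R : realFieldType} (f : R -> R) x y : slope f x y = slope f y x.
Proof. by rewrite /slope -[f x - f y]opprB -[x - y]opprB invrN mulrNN. Qed.

Lemma derive1_slope_cvg {R : realFieldType} (f : R -> R) x : derivable f x 1 ->
  slope f x (h + x) @[h --> 0^'] --> derive1 f x.
Proof.
move=> dfx; rewrite derive1E.
suff -> : (fun h => slope f x (h + x)) = (fun h => h^-1 *: ((f \o shift x) (h *: 1) - f x)).
  exact: dfx.
by apply/funext => h; rewrite /slope addrK [h *: 1]mulr1 mulrC.
Qed.

Section strictly_convex_slope.
Context {R : realFieldType} {f : R -> R}.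
Hypothesis f_sconvex : forall x y t, 0 <= x -> 0 <= y -> x != y -> 0 < t < 1 ->
  f (t * x + (1 - t) * y) < t * f x + (1 - t) * f y.

Lemma slope_lt_slope u v w : 0 <= u -> u < v -> v < w ->
  slope f u v < slope f u w < slope f v w.
Proof.
move=> u0 uv vw; set s := slope f u w.
have wu0 : 0 < w - u by lra.
have sE : f w - f u = s * (w - u) by rewrite /s /slope divfK ?gt_eqF.
pose t := (w - v) / (w - u).
have t01 : 0 < t < 1 by rewrite /t divr_gt0 ?ltr_pdivrMr ?subr_gt0 //=; lra.
have := f_sconvex u w t u0 (ltW (le_lt_trans u0 (lt_trans uv vw)))
  (negbT (lt_eqF (lt_trans uv vw))) t01.
rewrite (_ : t * u + _ = v); last by rewrite /t; field; rewrite gt_eqF.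
have -> : t * f u + (1 - t) * f w = f u + s * (v - u).
  by rewrite -[f w](subrK (f u)) sE /t; field; rewrite gt_eqF.
move=> fv.
rewrite /slope ltr_pdivrMr ?subr_gt0 // -/(slope f v w) /slope ltr_pdivlMr ?subr_gt0 //.
apply/andP; split; first lra.
suff : s * (w - v) = f w - f u - s * (v - u) by lra.
by rewrite sE; ring.
Qed.

Lemma derive1_le_slope x y : 0 <= x -> x < y -> derivable f x 1 ->
  derive1 f x <= slope f x y.
Proof.
move=> x0 xy dfx.
apply: (cvgr_to_le (cvg_dnbhs_at_right (derive1_slope_cvg _ _ dfx))); near=> h.
have h0 : 0 < h by near: h; exact: nbhs_right_gt.
have hyx : h < y - x by near: h; apply: nbhs_right_lt; rewrite subr_gt0.
have /andP[lt1 _] := slope_lt_slope x (h + x) y x0 ltac:(lra) ltac:(lra).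
exact: ltW.
Unshelve. all: by end_near.
Qed.

Lemma slope_le_derive1 x y : 0 <= x -> x < y -> derivable f y 1 ->
  slope f x y <= derive1 f y.
Proof.
move=> x0 xy dfy.
apply: (cvgr_to_ge (cvg_dnbhs_at_left (derive1_slope_cvg _ _ dfy))); near=> h.
have h0 : h < 0 by near: h; exact: nbhs_left_lt.
have hyx : x - y < h by near: h; apply: nbhs_left_gt; rewrite subr_lt0.
have /andP[_ lt2] := slope_lt_slope x (h + y) y x0 ltac:(lra) ltac:(lra).
by rewrite [slope f y _]slopeC; exact: ltW.
Unshelve. all: by end_near.
Qed.

Lemma derive1_lt x y : 0 <= x -> x < y -> derivable f x 1 -> derivable f y 1 ->
  derive1 f x < derive1 f y.
Proof.
move=> x0 xy dfx dfy; pose m := (x + y) / 2.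
have /andP[lt1 lt2] := slope_lt_slope x m y x0 ltac:(rewrite /m; lra) ltac:(rewrite /m; lra).
have := derive1_le_slope x m x0 ltac:(rewrite /m; lra) dfx.
have := slope_le_derive1 m y ltac:(rewrite /m; lra) ltac:(rewrite /m; lra) dfy.
lra.
Qed.

End strictly_convex_slope.

Section derive1_inverse.
Context {R : realType} {f : R -> R} {a b : \bar R} {g : R -> R}.
Hypothesis f_derivable : forall x, 0 < x -> derivable f x 1.
Hypothesis df_derivable : forall x, 0 < x -> derivable (derive1 f) x 1.
Hypothesis f_sconvex : forall x y t, 0 <= x -> 0 <= y -> x != y -> 0 < t < 1 ->
  f (t * x + (1 - t) * y) < t * f x + (1 - t) * f y.
Hypothesis df_range : derive1 f @` `]0, +oo[ = [set y : R | (a < y%:E < b)%E].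
Hypothesis g_inverse : forall y, (a < y%:E < b)%E -> 0 < g y /\ derive1 f (g y) = y.
Hypothesis df_cvgy : derive1 f x @[x --> +oo] --> +oo.

Local Notation df := (derive1 f).

Lemma df_lt x y : 0 < x -> x < y -> df x < df y.
Proof.
move=> x0 xy; apply: (derive1_lt f_sconvex _ _ (ltW x0) xy); apply: f_derivable => //.
exact: lt_trans x0 xy.
Qed.

Lemma df_in_range x : 0 < x -> (a < (df x)%:E < b)%E.
Proof.
move=> x0; suff : [set y : R | (a < y%:E < b)%E] (df x) by [].
by rewrite -df_range; exists x => //=; rewrite in_itv /= andbT.
Qed.

Lemma g_df x : 0 < x -> g (df x) = x.
Proof.
move=> x0; have [gx0 dfgx] := g_inverse _ (df_in_range _ x0).
case: (ltgtP (g (df x)) x) => // [/(df_lt _ _ gx0)|/(df_lt _ _ x0)]; by rewrite dfgx ltxx.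
Qed.

Lemma EFin_lt_b y : (y%:E < b)%E.
Proof.
have /cvgryPge/(_ (y + 1))[M [_ dfM]] := df_cvgy.
have Mm : M <= Num.max M 0 by rewrite le_max lexx.
have m0 : 0 <= Num.max M 0 by rewrite le_max lexx orbT.
have /andP[_ dfb] := df_in_range (Num.max M 0 + 1) ltac:(lra).
apply: le_lt_trans dfb; rewrite lee_fin.
apply: le_trans (dfM _ _); first by rewrite lerDl.
lra.
Qed.

Lemma g_inverse_gt y : (a < y%:E)%E -> 0 < g y /\ df (g y) = y.
Proof. by move=> ay; apply: g_inverse; rewrite ay EFin_lt_b. Qed.

Definition gext y := if (a < y%:E)%E then g y else 0.

Lemma gext_ge0 y : 0 <= gext y.
Proof. by rewrite /gext; case: ifPn => // /g_inverse_gt[/ltW]. Qed.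

Lemma gext_df x : 0 < x -> gext (df x) = x.
Proof. by move=> x0; have /andP[ax _] := df_in_range _ x0; rewrite /gext ax g_df. Qed.

Lemma gext_nondecreasing : {homo gext : y1 y2 / y1 <= y2}.
Proof.
move=> y1 y2 y12; rewrite {1}/gext; case: ifPn => [a1|_]; last exact: gext_ge0.
have a2 : (a < y2%:E)%E by apply: (lt_le_trans a1); rewrite lee_fin.
have [g10 dg1] := g_inverse_gt _ a1; have [g20 dg2] := g_inverse_gt _ a2.
rewrite /gext a2 leNgt; apply/negP => /(df_lt _ _ g20).
by rewrite dg1 dg2 ltNge y12.
Qed.

Lemma gext_le_df e y : 0 < e -> y <= df e -> gext y <= e.
Proof. by move=> e0 ye; rewrite -[leRHS](gext_df _ e0); exact: gext_nondecreasing. Qed.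

Lemma df_continuous x : 0 < x -> {for x, continuous df}.
Proof. by move=> x0; apply/differentiable_continuous/derivable1_diffP/df_derivable. Qed.

Lemma gext_continuous : continuous gext.
Proof.
move=> y0; rewrite /continuous_at; have [ay0|y0a] := boolP (a < y0%:E)%E.
- have [gy0 dfgy0] := g_inverse_gt _ ay0.
  have g_cont : {near df (g y0), continuous g}.
    apply: near_can_continuous; near=> x.
      by apply: g_df; near: x; exact: lt_nbhsr.
    by apply: df_continuous; near: x; exact: lt_nbhsr.
  rewrite dfgy0 in g_cont.
  have gextE : {near y0, g =1 gext}.
    have /andP[ady _] := df_in_range (g y0 / 2) ltac:(by rewrite divr_gt0).
    near=> y; rewrite /gext ifT //; apply: (lt_trans ady); rewrite lte_fin.
    near: y; apply: lt_nbhsr; rewrite -[ltRHS]dfgy0; apply: df_lt; lra.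
  have -> : gext y0 = g y0 by rewrite /gext ay0.
  exact: cvg_trans (near_eq_cvg gextE) (nbhs_singleton g_cont).
- have -> : gext y0 = 0 by rewrite /gext ifN.
  apply/cvgrPdist_le => e e0.
  have y0e : y0 < df e.
    rewrite -lte_fin; have /andP[+ _] := df_in_range _ e0.
    by apply: le_lt_trans; rewrite leNgt.
  near=> y; rewrite sub0r normrN ger0_norm ?gext_ge0 //.
  apply: gext_le_df e0 (ltW _); near: y; exact: lt_nbhsl.
Unshelve. all: by end_near.
Qed.

Context {theta : R}.
Hypothesis theta_gt0 : 0 < theta.

Lemma Ic_iff c x : Ic a b theta c x <-> (a < (theta * (x - c))%:E)%E.
Proof.
split=> [[y [/andP[ay _] ->]]|ax].
  by rewrite addrK mulrC divfK ?gt_eqF.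
by exists (theta * (x - c)); rewrite ax EFin_lt_b; split => //; rewrite mulrC mulKf ?gt_eqF ?subrK.
Qed.

Lemma Ic_gt c x : c + df 1 / theta < x -> Ic a b theta c x.
Proof.
move=> cx; apply/Ic_iff; have /andP[a1 _] := df_in_range 1 ltr01.
by apply: (lt_trans a1); rewrite lte_fin mulrC -ltr_pdivrMr // ltrBrDl.
Qed.

Lemma ereal_sup_Ic c : ereal_sup (EFin @` Ic a b theta c) = +oo%E.
Proof.
pose x M := Num.max M (c + df 1 / theta) + 1.
have Mx M : M < x M /\ c + df 1 / theta < x M.
  rewrite /x; set m := Num.max _ _.
  have : M <= m /\ c + df 1 / theta <= m by rewrite !le_max !lexx ?orbT.
  lra.
apply: hasNub_ereal_sup; last by exists (x 0); exact/Ic_gt/(Mx 0).2.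
case=> M /(_ (x M) (Ic_gt _ _ (Mx M).2)); by rewrite leNgt (Mx M).1.
Qed.

Definition z_ c x := gext (theta * (x - c)).

Lemma z_ge0 c x : 0 <= z_ c x.
Proof. exact: gext_ge0. Qed.

Lemma z_Ic c x : Ic a b theta c x -> x - df (z_ c x) / theta = c.
Proof.
move=> /Ic_iff ax; rewrite /z_ /gext ax (g_inverse_gt _ ax).2.
by rewrite mulrC mulKf ?gt_eqF // opprB addrC subrK.
Qed.

Lemma z_notIc c x : ~ Ic a b theta c x -> z_ c x = 0.
Proof. by move=> /Ic_iff/negP nax; rewrite /z_ /gext ifN. Qed.

Lemma z_indicator c x : g (theta * (x - c)) * \1_(Ic a b theta c) x = z_ c x.
Proof.
rewrite indicE /z_ /gext; have [ax|nax] := boolP (a < _)%E.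
  by rewrite mem_set ?mulr1 //; apply/Ic_iff.
by rewrite memNset ?mulr0 // => /Ic_iff; apply/negP.
Qed.

Lemma z_nonincreasing x : {homo z_^~ x : c1 c2 /~ c1 <= c2}.
Proof. by move=> c1 c2 c12; apply: gext_nondecreasing; rewrite ler_pM2l // lerB. Qed.

Lemma z_continuous c : continuous (z_ c).
Proof.
move=> x; apply: (@continuous_comp _ _ _ (fun x => theta * (x - c)) gext).
  by apply: cvgM; [exact: cvg_cst | apply: cvgB; [exact: cvg_id | exact: cvg_cst]].
exact: gext_continuous.
Qed.

Lemma z_continuous_in_c x : continuous (z_^~ x).
Proof.
move=> c; apply: (@continuous_comp _ _ _ (fun c => theta * (x - c)) gext).
  by apply: cvgM; [exact: cvg_cst | apply: cvgB; [exact: cvg_cst | exact: cvg_id]].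
exact: gext_continuous.
Qed.

Lemma z_cvgNy x : z_ (- n%:R) x @[n --> \oo] --> +oo.
Proof.
apply/cvgryPge => A; pose e := Num.max A 1.
have e0 : 0 < e by rewrite lt_max ltr01 orbT.
have Ae : A <= e by rewrite le_max lexx.
near=> n; apply: (le_trans Ae); rewrite /z_ -[leLHS](gext_df _ e0).
apply: gext_nondecreasing; rewrite opprK mulrC -ler_pdivrMr // -lerBlDl.
by near: n; exact: nbhs_infty_ger.
Unshelve. all: by end_near.
Qed.

Lemma z_cvgy x : z_ n%:R x @[n --> \oo] --> 0.
Proof.
apply/cvgrPdist_le => e e0; near=> n.
rewrite sub0r normrN ger0_norm ?z_ge0 //; apply: gext_le_df e0 _.
rewrite mulrC -ler_pdivlMr // lerBlDr -lerBlDl.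
by near: n; exact: nbhs_infty_ger.
Unshelve. all: by end_near.
Qed.

End derive1_inverse.
Arguments z_ {R} a g theta.

Section expectation_level.
Context {R : realType} {dm : measure_display} {Omega : measurableType dm}.
Variables (P : probability Omega R) (z : R -> R -> R) (L : Omega -> R).
Hypothesis z_ge0 : forall c x, 0 <= z c x.
Hypothesis z_nonincreasing : forall x, {homo z^~ x : c1 c2 /~ c1 <= c2}.
Hypothesis z_continuous_in_c : forall x, continuous (z^~ x).
Hypothesis z_cvgNy : forall x, z (- n%:R) x @[n --> \oo] --> +oo.
Hypothesis z_cvgy : forall x, z n%:R x @[n --> \oo] --> 0.
Hypothesis zL_integrable : forall c, P.-integrable setT (fun w => (z c (L w))%:E).

Local Notation H c := (\int[P]_w (z c (L w))%:E)%E.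

Let zL_measurable c : measurable_fun setT (fun w => (z c (L w))%:E).
Proof. exact: measurable_int (zL_integrable c). Qed.

Lemma expectation_nonincreasing c1 c2 : c1 <= c2 -> (H c2 <= H c1)%E.
Proof.
move=> c12; apply: ge0_le_integral => // [w _|w _]; first by rewrite lee_fin.
by rewrite lee_fin z_nonincreasing.
Qed.

Lemma expectation_dominated_cvg (cn : nat -> R) lo (l : Omega -> R) :
  (forall n, lo <= cn n) -> (forall w, z (cn n) (L w) @[n --> \oo] --> l w) ->
  measurable_fun setT (fun w => (l w)%:E) ->
  H (cn n) @[n --> \oo] --> (\int[P]_w (l w)%:E)%E.
Proof.
move=> lo_cn cvg_l ml.
have cvg_ae : {ae P, forall w, setT w -> (z (cn n) (L w))%:E @[n --> \oo] --> (l w)%:E}.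
  by apply: aeW => w _; apply/fine_cvgP; split; [exact: nearW | exact: cvg_l].
have dom_ae : {ae P, forall w n, setT w -> (`|(z (cn n) (L w))%:E| <= (z lo (L w))%:E)%E}.
  apply: aeW => w n _; rewrite gee0_abs ?lee_fin //.
  exact: z_nonincreasing.
by have [] := dominated_convergence measurableT (fun n => zL_measurable (cn n)) ml
  cvg_ae (zL_integrable lo) dom_ae.
Qed.

Lemma expectation_cvg (cn : nat -> R) c lo : (forall n, lo <= cn n) ->
  cn n @[n --> \oo] --> c -> H (cn n) @[n --> \oo] --> H c.
Proof.
move=> lo_cn cn_c; apply: expectation_dominated_cvg lo_cn _ (zL_measurable c) => w.
exact: (continuous_cvg _ (z_continuous_in_c _ _) cn_c).
Qed.

Lemma expectation_cvgy : H n%:R @[n --> \oo] --> 0%E.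
Proof.
rewrite -(integral0 P setT); apply: expectation_dominated_cvg (fun n => ler0n _ n) _ _.
  by move=> w; exact: z_cvgy.
exact: measurable_cst.
Qed.

Lemma expectation_cvgNy : H (- n%:R) @[n --> \oo] --> +oo%E.
Proof.
have z_nd w : setT w ->
    {homo (fun n => (z (- n%:R) (L w))%:E) : n m / (n <= m)%N >-> (n <= m)%E}.
  by move=> _ n m nm; rewrite lee_fin z_nonincreasing // lerN2 ler_nat.
have := cvg_monotone_convergence (mu := P) measurableT (fun n => zL_measurable _)
  (fun n w _ => z_ge0 _ _) z_nd.
suff -> : (fun w => limn (fun n => (z (- n%:R) (L w))%:E)) = cst +oo%E.
  by rewrite integral_cst // [X in (+oo * X)%E]probability_setT mule1.
apply/funext => w; apply: cvg_lim => //; exact/cvgeryP/z_cvgNy.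
Qed.

Lemma exists_expectation_eq v : 0 < v -> exists c, H c = v%:E.
Proof.
move=> v0; pose S := [set c | (v%:E <= H c)%E].
have [c0 Sc0] : exists c, S c.
  have /cvgeyPge/(_ v)[N _ HN] := expectation_cvgNy.
  by exists (- N%:R); apply: HN => /=.
have [c1 Hc1] : exists c, (H c < v%:E)%E.
  apply: contrapT => /forallNP nH.
  suff : (v%:E <= 0)%E by rewrite lee_fin leNgt v0.
  apply: cvge_to_ge expectation_cvgy _; apply: nearW => n.
  by rewrite leNgt; apply/negP/nH.
have S_ub : ubound S c1.
  move=> c Sc; rewrite leNgt; apply/negP => /ltW/expectation_nonincreasing H1.
  by have := le_lt_trans (le_trans Sc H1) Hc1; rewrite ltxx.
have S_sup : has_sup S by split; [exists c0 | exists c1].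
pose cs := sup S.
have S_left n : (v%:E <= H (cs - harmonic n))%E.
  have [c Sc csc] := sup_adherent (harmonic_gt0 n) S_sup.
  exact/(le_trans Sc)/expectation_nonincreasing/ltW.
have S_right n : (H (cs + harmonic n) <= v%:E)%E.
  rewrite leNgt; apply/negP => /ltW /(ub_le_sup S_sup.2).
  by rewrite -/cs gerDl leNgt harmonic_gt0.
have cs_left : cs - harmonic n @[n --> \oo] --> cs.
  by rewrite -[X in _ --> X]subr0; apply: cvgB; [exact: cvg_cst | exact: cvg_harmonic].
have cs_right : cs + harmonic n @[n --> \oo] --> cs.
  by rewrite -[X in _ --> X]addr0; apply: cvgD; [exact: cvg_cst | exact: cvg_harmonic].
have left_lb n : cs - 1 <= cs - harmonic n.
  by rewrite lerB // invf_le1 ?ler1n // ltr0n.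
have right_lb n : cs <= cs + harmonic n by rewrite lerDl harmonic_ge0.
exists cs; apply/le_anti/andP; split.
  by apply: cvge_to_le (expectation_cvg _ _ _ right_lb cs_right) _; exact: nearW.
by apply: cvge_to_ge (expectation_cvg _ _ _ left_lb cs_left) _; exact: nearW.
Qed.

End expectation_level.

Theorem proposition4p5 (R : realType) (T : R) (d : nat)
  (P : probability (Omega T d) R)
  (f : R -> R) (ell : R -> Omega T d -> R) (theta : R)
  (a b : \bar R) (g : R -> R) :
  0 < T ->
  (* P(X(0) = 0) = 1 *)
  P [set w : Omega T d | path_val w 0 = 0] = 1%E ->
  (* f : R_+ -> R twice differentiable, strictly convex, f(1) = 0 *)
  (forall x, 0 < x -> derivable f x 1 /\ derivable (derive1 f) x 1) ->
  (forall x y t, 0 <= x -> 0 <= y -> x != y -> 0 < t < 1 ->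
     f (t * x + (1 - t) * y) < t * f x + (1 - t) * f y) ->
  f 1 = 0 ->
  (* range(f') = (a, b) *)
  (derive1 f) @` `]0, +oo[ = [set y : R | (a < y%:E < b)%E] ->
  (* l is a non-anticipative functional with l(0, 0) = 0 *)
  non_anticipative ell ->
  ell 0 (zero_path T d) = 0 ->
  0 < theta ->
  (* g : (a,b) -> (0,oo) is the inverse of f' *)
  (forall y, (a < y%:E < b)%E -> 0 < g y /\ (derive1 f) (g y) = y) ->
  (* f'(x) -> oo as x -> oo *)
  (derive1 f) x @[x --> +oo] --> +oo ->
  (forall c : R, P.-integrable setT
     (fun w => (g (theta * (ell T w - c)) * \1_(Ic a b theta c) (ell T w))%:E)) ->
  exists c : R, exists z : R -> R,
    (forall x, 0 <= z x) /\
    (forall x, Ic a b theta c x -> x - (derive1 f) (z x) / theta = c) /\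
    (forall x, ~ Ic a b theta c x -> z x = 0) /\
    measurable_fun setT z /\
    (\int[P]_w (z (ell T w))%:E = 1)%E /\
    P [set w | ((ell T w)%:E < ereal_sup (EFin @` Ic a b theta c))%E] = 1%E.
Proof.
move=> _ _ f_derivable2 f_sconvex _ df_range _ _ theta_gt0 g_inverse df_cvgy integrable_c.
have f_derivable x : 0 < x -> derivable f x 1 by move=> /f_derivable2[].
have df_derivable x : 0 < x -> derivable (derive1 f) x 1 by move=> /f_derivable2[].
have zL_integrable c : P.-integrable setT (fun w => (z_ a g theta c (ell T w))%:E).
  under eq_fun do rewrite -(z_indicator df_range df_cvgy theta_gt0).
  exact: integrable_c.
have [c zL_E1] := exists_expectation_eq P (z_ a g theta) (ell T)
  (z_ge0 df_range g_inverse df_cvgy)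
  (z_nonincreasing f_derivable f_sconvex df_range g_inverse df_cvgy theta_gt0)
  (z_continuous_in_c f_derivable df_derivable f_sconvex df_range g_inverse df_cvgy)
  (z_cvgNy f_derivable f_sconvex df_range g_inverse df_cvgy theta_gt0)
  (z_cvgy f_derivable f_sconvex df_range g_inverse df_cvgy theta_gt0)
  zL_integrable 1 ltr01.
exists c, (z_ a g theta c); split=> [x|].
  exact: (z_ge0 df_range g_inverse df_cvgy c x).
split=> [x|]; first exact: (z_Ic df_range g_inverse df_cvgy theta_gt0 c x).
split=> [x|]; first exact: (z_notIc df_range df_cvgy theta_gt0 c x).
split; first exact: continuous_measurable_fun
  (z_continuous f_derivable df_derivable f_sconvex df_range g_inverse df_cvgy c).
split; first exact: zL_E1.
rewrite (ereal_sup_Ic df_range df_cvgy theta_gt0 c).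
suff -> : [set w | ((ell T w)%:E < +oo)%E] = setT by exact: probability_setT.
by apply/seteqP; split=> // w _; exact: ltry.
Qed.
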